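(* Let $G$ be a simple graph with $m$ edges and girth $g(G)\ge 5$. For an edge $uv$ write $G_{uv}=G-\{u,v\}$. Then the number $p(G;5)$ of $5$-matchings of $G$ equals $\frac15$ times \begin{align*} &\frac{1}{24}m(m^4+10m^3+43m^2+54m-328)+\frac54 M_1(G)^2-\frac12\alpha(G)(m-7)-\frac56\alpha_2(G)\\ &-\frac1{12}M_1(G)(2m^3+30m^2+61m-225)+\frac12\beta(G)+\frac1{12}M_2(G)(6m^2+66m-239)\\ &+\frac1{24}F(G)(6m^2+24m-149)+\frac1{12}M_1^4(G)(m+10)+\frac14 M_2^2(G)-EM_2(G)-\frac5{24}M_1^5(G)\\ &+\frac18\sum_{uv\in E(G)}M_1(G_{uv})^2+\frac13\sum_{uv\in E(G)}m(G_{uv})F(G_{uv})-\frac14\sum_{uv\in E(G)}m(G_{uv})^2M_1(G_{uv})\\ &-\sum_{uv\in E(G)}EM_2(G_{uv})+\sum_{uv\in E(G)}m(G_{uv})M_2(G_{uv}), \end{align*} where $M_1(\cdot)^2$ and $m(\cdot)^2$ denote squares of numbers.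
   Context: All graphs are finite, simple and undirected. A $k$-matching is a set of $k$ pairwise vertex-disjoint edges; $p(G;k)$ is the number of $k$-matchings. $m(H)$ is the number of edges of $H$; $G-\{u,v\}$ is obtained by deleting vertices $u,v$. $d_G(v)$ is the degree of $v$; the girth is the length of a shortest cycle. $M_1^\alpha(G)=\sum_v d_G(v)^\alpha$ (exponent on degrees), $M_1=M_1^2$, $F=M_1^3$; $M_2(G)=\sum_{uv\in E(G)}d_G(u)d_G(v)$; $M_2^2(G)=\sum_{uv\in E(G)}d_G(u)^2d_G(v)^2$; $\alpha_\lambda(G)=\sum_{uv\in E(G)}d_G(u)d_G(v)[d_G(u)^\lambda+d_G(v)^\lambda]$, $\alpha=\alpha_1$. For an edge $e=uv$, $d_G(e)=d_G(u)+d_G(v)-2$; $e\sim f$ means distinct edges sharing a vertex, $e\cap f$ is that vertex, and sums over $e\sim f$ are over unordered pairs; $EM_2(G)=\sum_{e\sim f}d_G(e)d_G(f)$; $\beta(G)=\sum_{e\sim f}d_G(e\cap f)(d_G(e)+d_G(f))$. *)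

(* All invariants are defined for the induced
   subgraph G[V] on a vertex set V : {set T}; G itself is V = [set: T], and
   G - {u,v} is V = ~: [set u; v]. *)
From mathcomp Require Import all_boot all_order all_algebra.
Set Implicit Arguments. Unset Strict Implicit. Unset Printing Implicit Defensive.
Import Order.TTheory GRing.Theory Num.Theory.
Local Open Scope ring_scope.

Section GraphDefs.
Variables (T : finType) (e : rel T).

Definition simple_graph := symmetric e /\ irreflexive e.

Definition girth_ge5 := forall s : seq T,
  (3 <= size s)%N -> uniq s -> cycle e s -> (5 <= size s)%N.

Variable V : {set T}.

Definition deg (x : T) : nat := #|[set y in V | e x y]|.

Definition edges : {set {set T}} :=
  [set [set x.1; x.2] | x : T * T & [&& x.1 \in V, x.2 \in V & e x.1 x.2]].

Definition nedges : nat := #|edges|.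

Definition degR (x : T) : rat := (deg x)%:R.

Definition M1pow (a : nat) : rat := \sum_(x in V) degR x ^+ a.
Definition M1 : rat := M1pow 2.
Definition Fidx : rat := M1pow 3.

Definition M2 : rat := \sum_(E in edges) \prod_(x in E) degR x.
Definition M22 : rat := \sum_(E in edges) \prod_(x in E) degR x ^+ 2.
Definition alpha_l (l : nat) : rat :=
  \sum_(E in edges) (\prod_(x in E) degR x) * (\sum_(x in E) degR x ^+ l).

Definition edeg (E : {set T}) : rat := \sum_(x in E) degR x - 2.

Definition adjpairs : {set {set {set T}}} :=
  [set P : {set {set T}} | [&& P \subset edges, #|P| == 2%N
                             & \bigcap_(E in P) E != set0]].

Definition EM2 : rat := \sum_(P in adjpairs) \prod_(E in P) edeg E.
Definition betaidx : rat :=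
  \sum_(P in adjpairs) (\sum_(x in \bigcap_(E in P) E) degR x) *
                       (\sum_(E in P) edeg E).

Definition nmatch (k : nat) : nat :=
  #|[set M : {set {set T}} | [&& M \subset edges, #|M| == k & trivIset M]]|.

End GraphDefs.

(* Every (k+1)-matching through a fixed edge uv is uv plus a k-matching of
   G_uv = G - {u,v}, so double counting gives (k+1) p(G;k+1) = sum_uv p(G_uv;k).
   Starting from p(G;1) = m we obtain closed formulas for p(G;2), p(G;3) and
   p(G;4) by evaluating these edge sums.  Since G has no triangle and no
   4-cycle, the invariants m, M_1^k and M_2 of G_uv are explicit functions of
   the invariants of G and of local quantities at u and v: the degrees, the
   neighbour sums T_j(x) = sum_{y~x} d(y)^j and U(x) = sum_{y~x} T_1(y).
   Each edge sum is then split into its two orientations ("certificates", lists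
   of coefficients and arc monomials, checked pointwise by field) and summed
   over all arcs, which yields the atoms A_ij = sum_{x~y} d(x)^i d(y)^j and
   Q = sum_x T_1(x)^2.  Finally every invariant in the statement (alpha, beta,
   EM_2, ...) is expressed in these atoms and the theorem becomes a rational
   identity.  The part of p(G;4) that is not local (EM_2 and products of
   invariants) stays a sum over edges, as in the statement. *)
From mathcomp Require Import all_boot all_order all_algebra.
From mathcomp Require Import ring.
Import Order.TTheory GRing.Theory Num.Theory.
Local Open Scope ring_scope.
Set Implicit Arguments. Unset Strict Implicit. Unset Printing Implicit Defensive.

Section Adjacency.
Variables (T : finType) (e : rel T).
Hypothesis esym : symmetric e.
Hypothesis eirr : irreflexive e.

Definition adj (x y : T) : rat := (e x y)%:R.
Local Notation a := adj.
Local Notation d V := (degR e V).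

Lemma adjC x y : a x y = a y x.
Proof. by rewrite /adj esym. Qed.

Lemma adjxx x : a x x = 0.
Proof. by rewrite /adj eirr. Qed.

Lemma adj_idem x y : a x y * a x y = a x y.
Proof. by rewrite /adj; case: (e x y); rewrite ?mulr0 ?mulr1. Qed.

Lemma adj_edge x y : e x y -> a x y = 1.
Proof. by rewrite /adj => ->. Qed.

Lemma edge_neq x y : e x y -> x != y.
Proof. by apply: contraTneq => ->; rewrite eirr. Qed.

Lemma degRE (V : {set T}) x : d V x = \sum_(y in V) a x y.
Proof.
rewrite /degR /deg -sum1_card natr_sum big_mkcond [RHS]big_mkcond.
by apply: eq_bigr => y _; rewrite inE /adj; case: (y \in V); case: (e x y).
Qed.

Lemma set2_eqE (x y p q : T) : x != y ->
  ([set p; q] == [set x; y]) = ((p == x) && (q == y)) || ((p == y) && (q == x)).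
Proof.
move=> xy; apply/idP/idP; last first.
  by case/orP=> /andP[/eqP -> /eqP ->] //; rewrite setUC.
move/eqP=> E.
have : x \in [set p; q] by rewrite E !inE eqxx.
have : y \in [set p; q] by rewrite E !inE eqxx orbT.
rewrite !inE => /orP[] /eqP hy /orP[] /eqP hx; subst; rewrite ?eqxx ?orbT //.
all: by rewrite eqxx in xy.
Qed.

Lemma sum_set2 (f : T -> rat) x y : x != y -> \sum_(z in [set x; y]) f z = f x + f y.
Proof. by move=> xy; rewrite big_setU1 ?inE // big_set1. Qed.

Lemma prod_set2 (f : T -> rat) x y : x != y -> \prod_(z in [set x; y]) f z = f x * f y.
Proof. by move=> xy; rewrite big_setU1 ?inE // big_set1. Qed.

Lemma sum_setD2 (V : {set T}) u v (f : T -> rat) : u \in V -> v \in V -> u != v ->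
  \sum_(x in V :\: [set u; v]) f x = \sum_(x in V) f x - f u - f v.
Proof.
move=> uV vV uv; rewrite [in RHS](big_setD1 u uV) (big_setD1 v) /=; last first.
  by rewrite !inE eq_sym uv vV.
have -> : V :\ u :\ v = V :\: [set u; v].
  by apply/setP => x; rewrite !inE; case: (x == u); case: (x == v); rewrite ?andbF.
ring.
Qed.

Lemma deg_setD2 (V : {set T}) u v x : u \in V -> v \in V -> u != v ->
  d (V :\: [set u; v]) x = d V x - a x u - a x v.
Proof. by move=> uV vV uv; rewrite !degRE sum_setD2. Qed.

Definition arcs (V : {set T}) : {set T * T} :=
  [set p | [&& p.1 \in V, p.2 \in V & e p.1 p.2]].

Definition adjsum (V : {set T}) (F : T -> T -> rat) : rat :=
  \sum_(u in V) \sum_(v in V) a u v * F u v.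

Lemma edge_sum (V : {set T}) (f : {set T} -> rat) :
  \sum_(E in edges e V) f E = 2^-1 * adjsum V (fun x y => f [set x; y]).
Proof.
have -> : adjsum V (fun x y => f [set x; y]) = \sum_(p in arcs V) f [set p.1; p.2].
  rewrite /adjsum pair_big big_mkcond [RHS]big_mkcond /=; apply: eq_bigr => -[x y] _.
  rewrite !inE /= /adj.
  by case: (x \in V); case: (y \in V); case: (e x y); rewrite /= ?mul1r ?mul0r.
have edgesE : edges e V = [set [set p.1; p.2] | p in arcs V].
  by apply/setP=> E; apply/imsetP/imsetP=> -[p pV ->]; exists p; rewrite // inE in pV *.
rewrite (partition_big_imset (fun p : T * T => [set p.1; p.2])) -edgesE mulr_sumr.
apply: eq_bigr => E /imsetP [[x y]]; rewrite inE /= => /and3P [xV yV exy] ->.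
have xy := edge_neq exy.
rewrite (eq_bigr (fun _ => f [set x; y])); last by move=> p /andP [_ /eqP ->].
rewrite sumr_const.
have -> : #|[pred p in arcs V | [set p.1; p.2] == [set x; y]]| = 2%N.
  have <- : #|[set (x, y); (y, x)]| = 2%N by rewrite cards2 xpair_eqE (negbTE xy).
  apply: eq_card => -[p q]; rewrite !inE /= set2_eqE // !xpair_eqE.
  apply/andP/orP => [[_ /orP[] /andP [/eqP -> /eqP ->]]|]; rewrite ?eqxx; [by left|by right|].
  by case=> /andP [/eqP -> /eqP ->]; rewrite ?xV ?yV ?exy ?eqxx ?orbT // esym.
by rewrite -mulr_natr; field.
Qed.

Lemma adjsumD (V : {set T}) F G :
  adjsum V (fun u v => F u v + G u v) = adjsum V F + adjsum V G.
Proof.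
rewrite /adjsum -big_split; apply: eq_bigr => u _.
by rewrite -big_split; apply: eq_bigr => v _; rewrite mulrDr.
Qed.

Lemma adjsumZ (V : {set T}) c F : adjsum V (fun u v => c * F u v) = c * adjsum V F.
Proof.
rewrite /adjsum mulr_sumr; apply: eq_bigr => u _; rewrite mulr_sumr.
by apply: eq_bigr => v _; rewrite mulrCA.
Qed.

Lemma adjsum_sym (V : {set T}) F : adjsum V F = adjsum V (fun u v => F v u).
Proof.
rewrite /adjsum exchange_big; apply: eq_bigr => u _; apply: eq_bigr => v _.
by rewrite adjC.
Qed.

Lemma eq_adjsum (V : {set T}) F G :
  (forall u v, u \in V -> v \in V -> e u v -> F u v = G u v) ->
  adjsum V F = adjsum V G.
Proof.
move=> FG; apply: eq_bigr => u uV; apply: eq_bigr => v vV; rewrite /adj.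
by case E: (e u v); rewrite ?mul0r // FG.
Qed.

Lemma edge_sum_split (V : {set T}) (f : {set T} -> rat) (H : T -> T -> rat) :
  (forall u v, u \in V -> v \in V -> e u v -> 2 * f [set u; v] = H u v + H v u) ->
  \sum_(E in edges e V) f E = 2^-1 * adjsum V H.
Proof.
move=> fH; rewrite edge_sum; congr (_ * _).
have h2 : 2 * adjsum V (fun u v => f [set u; v]) = adjsum V H + adjsum V H.
  by rewrite -adjsumZ {2}[adjsum V H]adjsum_sym -adjsumD; apply: eq_adjsum.
by apply: (mulfI (_ : (2 : rat) != 0)) => //; rewrite h2; ring.
Qed.

End Adjacency.

Section Atoms.
Variables (T : finType) (e : rel T).
Hypothesis esym : symmetric e.
Hypothesis eirr : irreflexive e.
Local Notation a := (adj e).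
Local Notation d V := (degR e V).
Variable V : {set T}.

Definition nbrsum (j : nat) (u : T) : rat := \sum_(x in V) a u x * d V x ^+ j.
Definition nbr2sum (u : T) : rat := \sum_(x in V) a u x * nbrsum 1 x.
Definition degpair (i j : nat) : rat := adjsum e V (fun u v => d V u ^+ i * d V v ^+ j).
Definition Qsum : rat := \sum_(x in V) nbrsum 1 x ^+ 2.

Lemma degpairC i j : degpair i j = degpair j i.
Proof.
rewrite /degpair (adjsum_sym esym); apply: eq_bigr => u _; apply: eq_bigr => v _.
by rewrite [_ ^+ i * _]mulrC.
Qed.

Lemma sum_adj_const u (c : rat) : \sum_(v in V) a u v * c = d V u * c.
Proof. by rewrite -mulr_suml degRE. Qed.

Lemma M1pow_degpair k : M1pow e V k.+1 = degpair k 0.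
Proof.
rewrite /M1pow /degpair /adjsum; apply: eq_bigr => u _.
under eq_bigr do rewrite expr0 mulr1.
by rewrite sum_adj_const exprS.
Qed.

Lemma nedges_degpair : (nedges e V)%:R = 2^-1 * degpair 0 0.
Proof.
by rewrite -[(nedges e V)%:R]mulr1n -sumr_const (edge_sum esym eirr); congr (_ * _).
Qed.

(* The arc monomials that occur when edge sums are split into orientations,
   together with the value of their sum over all arcs. *)
Inductive monomial := Deg of nat & nat | Nbr of nat | DegNbr | NbrDeg | Nbr2.

Definition mono_eval (m : monomial) (u v : T) : rat :=
  match m with
  | Deg i j => d V u ^+ i * d V v ^+ j
  | Nbr j => nbrsum j u
  | DegNbr => d V u * nbrsum 1 u
  | NbrDeg => nbrsum 1 u * d V v
  | Nbr2 => nbr2sum u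
  end.

Definition mono_atom (m : monomial) : rat :=
  match m with
  | Deg i j => degpair i j
  | Nbr j => degpair 1 j
  | DegNbr => degpair 2 1
  | NbrDeg | Nbr2 => Qsum
  end.

Lemma adjsum_monomial m : adjsum e V (mono_eval m) = mono_atom m.
Proof.
rewrite /mono_atom /degpair /adjsum.
case: m => [i j|j|||] /=; try done.
- apply: eq_bigr => u _; rewrite sum_adj_const /nbrsum mulr_sumr.
  by apply: eq_bigr => v _; rewrite expr1 mulrCA.
- apply: eq_bigr => u _; rewrite sum_adj_const /nbrsum !mulr_sumr.
  by apply: eq_bigr => v _; ring.
- apply: eq_bigr => u _; rewrite expr2 {3}/nbrsum mulr_sumr.
  by apply: eq_bigr => v _; rewrite expr1; ring.
- transitivity (\sum_(u in V) \sum_(x in V) a u x * (d V u * nbrsum 1 x)).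
    apply: eq_bigr => u _; rewrite sum_adj_const /nbr2sum mulr_sumr.
    by apply: eq_bigr => x _; rewrite mulrCA.
  rewrite exchange_big; apply: eq_bigr => x _; rewrite expr2 {2}/nbrsum mulr_suml.
  by apply: eq_bigr => u _; rewrite (adjC esym u x) expr1; ring.
Qed.

Definition poly_eval (s : seq (rat * monomial)) (u v : T) : rat :=
  \sum_(t <- s) t.1 * mono_eval t.2 u v.

Lemma adjsum_poly s : adjsum e V (poly_eval s) = \sum_(t <- s) t.1 * mono_atom t.2.
Proof.
elim: s => [|t s IH].
  rewrite big_nil /adjsum big1 // => u _; rewrite big1 // => v _.
  by rewrite /poly_eval big_nil mulr0.
rewrite big_cons -IH -adjsum_monomial -adjsumZ -adjsumD.
by apply: eq_bigr => u _; apply: eq_bigr => v _; rewrite /poly_eval big_cons.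
Qed.

Lemma edge_sum_poly (f : {set T} -> rat) s :
  (forall u v, u \in V -> v \in V -> e u v ->
     2 * f [set u; v] = poly_eval s u v + poly_eval s v u) ->
  \sum_(E in edges e V) f E = 2^-1 * \sum_(t <- s) t.1 * mono_atom t.2.
Proof. by move=> fs; rewrite -adjsum_poly; exact: edge_sum_split. Qed.

Lemma sum_vertex_poly (c4 c3 c2 c1 b2 b1 b0 q t : rat) :
  \sum_(x in V) (c4 * d V x ^+ 4 + c3 * d V x ^+ 3 + c2 * d V x ^+ 2 + c1 * d V x
                 + (b2 * d V x ^+ 2 + b1 * d V x + b0) * nbrsum 1 x
                 + q * nbrsum 1 x ^+ 2 + t * nbrsum 2 x) =
  c4 * degpair 3 0 + c3 * degpair 2 0 + c2 * degpair 1 0 + c1 * degpair 0 0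
  + b2 * degpair 2 1 + b1 * degpair 1 1 + b0 * degpair 0 1 + q * Qsum + t * degpair 0 2.
Proof.
have sumT j : \sum_(x in V) d V x ^+ j * nbrsum 1 x = degpair j 1.
  apply: eq_bigr => x _; rewrite /nbrsum mulr_sumr.
  by apply: eq_bigr => y _; rewrite expr1; ring.
have sumT2 : \sum_(x in V) nbrsum 2 x = degpair 0 2.
  apply: eq_bigr => x _; apply: eq_bigr => y _; ring.
rewrite !big_split /= -!mulr_sumr -sumT2 -!sumT -!M1pow_degpair /M1pow.
rewrite /Qsum !mulr_sumr -!big_split /=; apply: eq_bigr => x _; ring.
Qed.

End Atoms.

Section Matchings.
Variables (T : finType) (e : rel T).

Lemma edgesP (V : {set T}) E :
  reflect (exists x y, [/\ x \in V, y \in V, e x y & E = [set x; y]]) (E \in edges e V).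
Proof.
apply: (iffP imsetP).
- by case=> -[x y]; rewrite inE /= => /and3P [? ? ?] ->; exists x, y.
- by case=> x [y] [? ? ? ->]; exists (x, y); rewrite // inE /=; apply/and3P.
Qed.

Lemma edge_sub (V : {set T}) E : E \in edges e V -> E \subset V.
Proof.
by case/edgesP=> x [y] [xV yV _ ->]; apply/subsetP=> z; rewrite !inE => /orP [] /eqP ->.
Qed.

(* Edges are nonempty; matchings thus never contain the empty set. *)
Lemma edge_neq0 (V : {set T}) E : E \in edges e V -> E != set0.
Proof. by case/edgesP=> x [y] [_ _ _ ->]; apply/set0Pn; exists x; rewrite !inE eqxx. Qed.

Lemma edges_subset (W V : {set T}) : W \subset V -> edges e W \subset edges e V.
Proof.
move=> /subsetP WV; apply/subsetP=> E /edgesP [x [y [xW yW exy ->]]].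
by apply/edgesP; exists x, y; split; rewrite ?WV.
Qed.

Lemma edges_setD (V E F : {set T}) :
  (F \in edges e (V :\: E)) = (F \in edges e V) && [disjoint F & E].
Proof.
apply/idP/andP => [FW|[]].
  split; first by apply: subsetP FW; apply/edges_subset/subsetDl.
  rewrite disjoint_subset; apply/subsetP=> z /(subsetP (edge_sub FW)).
  by rewrite !inE => /andP [].
case/edgesP=> x [y [xV yV exy ->]] dis; apply/edgesP; exists x, y; split => //.
- by rewrite inE xV andbT; apply/negbT/(disjointFr dis); rewrite !inE eqxx.
- by rewrite inE yV andbT; apply/negbT/(disjointFr dis); rewrite !inE eqxx orbT.
Qed.

Lemma edge_notin_setD (V E : {set T}) : E \in edges e V -> E \notin edges e (V :\: E).
Proof. by move=> EV; rewrite edges_setD EV -setI_eq0 setIid (edge_neq0 EV). Qed.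

Definition matchings (V : {set T}) (k : nat) : {set {set {set T}}} :=
  [set M : {set {set T}} | [&& M \subset edges e V, #|M| == k & trivIset M]].

Lemma matchings_through (V : {set T}) k E : E \in edges e V ->
  [set M in matchings V k.+1 | E \in M] = [set E |: M | M in matchings (V :\: E) k].
Proof.
move=> EV; have EnW := edge_notin_setD EV.
apply/setP=> M; rewrite !inE; apply/idP/imsetP.
- case/andP=> /and3P [sub /eqP cM triv] EM; exists (M :\ E); last by rewrite setD1K.
  rewrite inE; apply/and3P; split.
  + apply/subsetP=> F /setD1P [FE FM]; rewrite edges_setD (subsetP sub) //.
    exact: (trivIsetP triv).
  + by move: cM; rewrite (cardsD1 E) EM add1n => -[->].
  + by apply: trivIsetS triv; apply: subD1set.
- case=> M' /[!inE] /and3P [sub /eqP cM triv] ->; rewrite setU11 andbT.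
  have EM' : E \notin M' by apply: contra EnW; apply: (subsetP sub).
  have subV : M' \subset edges e V.
    by apply: subset_trans sub _; apply/edges_subset/subsetDl.
  apply/and3P; split; first by rewrite subUset sub1set EV.
    by rewrite cardsU1 EM' cM.
  have disE : {in M', forall F : {set T}, [disjoint E & F]}.
    by move=> F /(subsetP sub); rewrite edges_setD disjoint_sym => /andP [].
  have M'0 : set0 \notin M' by apply/negP=> /(subsetP sub) /edge_neq0; rewrite eqxx.
  by case: (trivIsetU1 disE triv M'0).
Qed.

(* Double counting the pairs (M, E) with E in M: k p(G;k) = sum_E p(G - E; k-1). *)
Lemma nmatch_rec (V : {set T}) k :
  (k.+1)%:R * (nmatch e V k.+1)%:R = \sum_(E in edges e V) (nmatch e (V :\: E) k)%:R :> rat.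
Proof.
rewrite -natrM -natr_sum; congr (_%:R).
have -> : (k.+1 * nmatch e V k.+1 = \sum_(M in matchings V k.+1) #|M|)%N.
  rewrite mulnC -sum_nat_const; apply: eq_bigr => M.
  by rewrite inE => /and3P [_ /eqP -> _].
have cardM M : M \in matchings V k.+1 -> #|M| = (\sum_(E in edges e V) (E \in M))%N.
  rewrite inE => /and3P [sub _ _]; rewrite -big_mkcondr /= sum1_card.
  apply: eq_card => E; rewrite [RHS]unfold_in /= andbC.
  by rewrite andb_idr // => /(subsetP sub).
rewrite (eq_bigr _ cardM) exchange_big; apply: eq_bigr => E EV.
have -> : nmatch e (V :\: E) k = #|[set M in matchings V k.+1 | E \in M]|.
  rewrite (matchings_through _ EV) card_in_imset // => M1 M2.
  have notE M : M \in matchings (V :\: E) k -> E \notin M.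
    rewrite inE => /and3P [sub _ _]; apply: contra (edge_notin_setD EV).
    exact: (subsetP sub).
  by move=> /notE M1E /notE M2E eqM; rewrite -(setU1K M1E) -(setU1K M2E) eqM.
by rewrite -big_mkcondr /= sum1_card; apply: eq_card => M; rewrite [RHS]inE.
Qed.

Lemma nmatch0 (V : {set T}) : nmatch e V 0 = 1%N.
Proof.
rewrite -(cards1 (set0 : {set {set T}})); apply: eq_card => M; rewrite !inE.
apply/and3P/eqP => [[_ /eqP /cards0_eq //]|->]; split; rewrite ?cards0 ?sub0set //.
by apply/trivIsetP => A B; rewrite inE.
Qed.

Lemma nmatch1 (V : {set T}) : (nmatch e V 1)%:R = (nedges e V)%:R :> rat.
Proof.
have := nmatch_rec V 0; rewrite mul1r => ->.
by under eq_bigr do rewrite nmatch0; rewrite sumr_const.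
Qed.

End Matchings.

Section Wedges.
Variables (T : finType) (e : rel T).
Hypothesis esym : symmetric e.
Hypothesis eirr : irreflexive e.
Local Notation a := (adj e).
Variable V : {set T}.

(* A wedge ((x, y), z) is a path y - x - z with centre x; it represents the
   pair of adjacent edges {xy, xz}.  Each such pair comes from two wedges. *)
Definition wedges : {set (T * T) * T} :=
  [set t | [&& t.1.1 \in V, t.1.2 \in V, t.2 \in V, e t.1.1 t.1.2, e t.1.1 t.2
            & t.1.2 != t.2]].

Definition wedge_pair (t : (T * T) * T) : {set {set T}} :=
  [set [set t.1.1; t.1.2]; [set t.1.1; t.2]].

Lemma set2_inj (x y z : T) : x != y -> x != z -> ([set x; y] == [set x; z]) = (y == z).
Proof.
move=> xy xz; rewrite set2_eqE // eqxx /=.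
by case: (y =P z) => [-> //|_]; rewrite (negbTE xz).
Qed.

Lemma wedge_cap x y z : ((x, y), z) \in wedges ->
  \bigcap_(E in wedge_pair ((x, y), z)) E = [set x].
Proof.
rewrite inE /= => /and5P [_ _ _ exy /andP [exz yz]].
have [xy xz] := (edge_neq eirr exy, edge_neq eirr exz).
rewrite big_setU1 /= ?big_set1; last by rewrite inE set2_inj.
apply/setP => w; rewrite !inE; case: (w =P x) => [-> //|_] /=.
by case: (w =P y) => [->|//]; rewrite (negbTE yz).
Qed.

Lemma wedge_pair_eq x y z x' y' z' :
  ((x, y), z) \in wedges -> ((x', y'), z') \in wedges ->
  wedge_pair ((x', y'), z') = wedge_pair ((x, y), z) ->
  x' = x /\ (y', z') \in [set (y, z); (z, y)].
Proof.
move=> t t'; have := t; have := t'.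
rewrite !inE /= => /and5P [_ _ _ exy' /andP [exz' yz']] /and5P [_ _ _ exy /andP [exz yz]] same.
have x'x : x' = x by apply/set1_inj; rewrite -(wedge_cap t) -(wedge_cap t') same.
subst x'; split => //.
have /[!inE] : [set x; y'] \in wedge_pair ((x, y), z) by rewrite -same !inE eqxx.
have /[!inE] : [set x; z'] \in wedge_pair ((x, y), z) by rewrite -same !inE eqxx orbT.
have neq := edge_neq eirr.
rewrite !set2_inj ?neq //= !xpair_eqE.
by case/orP=> /eqP ? /orP [] /eqP ?; subst; rewrite ?eqxx ?orbT //; rewrite eqxx in yz'.
Qed.

Lemma adjpairsE : adjpairs e V = wedge_pair @: wedges.
Proof.
apply/setP => P; apply/idP/imsetP.
- rewrite inE => /and3P [sub /cards2P [E1 [E2 [E12 PE]]] /set0Pn [w /bigcapP wP]].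
  have edge_at E : E \in P -> exists2 y, ((w, y) \in arcs e V) & E = [set w; y].
    move=> EP; have /edgesP [p [q [pV qV epq Epq]]] := subsetP sub E EP.
    move: (wP E EP); rewrite Epq !inE => /orP [] /eqP wpq; subst w.
      by exists q; rewrite // inE /= pV qV epq.
    by exists p; rewrite 1?setUC // inE /= pV qV esym.
  have E1P : E1 \in P by rewrite PE !inE eqxx.
  have E2P : E2 \in P by rewrite PE !inE eqxx orbT.
  have [y /[!inE] /and3P [wV yV ewy] E1y] := edge_at E1 E1P.
  have [z /[!inE] /and3P [_ zV ewz] E2z] := edge_at E2 E2P.
  exists ((w, y), z); last by rewrite PE E1y E2z.
  rewrite inE /= wV yV zV ewy ewz /=; apply: contra E12 => /eqP yz.
  by rewrite E1y E2z yz.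
- case=> -[[x y] z] /[dup] t /[!inE] /= /and5P [xV yV zV exy /andP [exz yz]] ->.
  apply/and3P; split.
  + apply/subsetP => E; rewrite !inE => /orP [] /eqP ->; apply/edgesP.
    * by exists x, y.
    * by exists x, z.
  + by rewrite /wedge_pair cards2 set2_inj ?(edge_neq eirr exy) ?(edge_neq eirr exz) /= ?yz.
  + apply/set0Pn; exists x; apply/bigcapP => E.
    by rewrite !inE => /orP [] /eqP ->; rewrite !inE eqxx.
Qed.

Lemma wedge_fiber x y z : ((x, y), z) \in wedges ->
  #|[pred t in wedges | wedge_pair t == wedge_pair ((x, y), z)]| = 2%N.
Proof.
move=> t; have := t; rewrite inE /= => /and5P [xV yV zV exy /andP [exz yz]].
have <- : #|[set ((x, y), z); ((x, z), y)]| = 2%N.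
  by rewrite cards2 !xpair_eqE eqxx /= (negbTE yz).
apply: eq_card => -[[x' y'] z']; rewrite in_set2 !xpair_eqE.
apply/andP/idP => [[t' /eqP same]|].
  have [-> yz'] := wedge_pair_eq t t' same.
  by move: yz'; rewrite !inE !xpair_eqE eqxx.
case/orP => /andP [/andP [/eqP -> /eqP ->] /eqP ->]; split => //.
  by rewrite inE /= xV zV yV exz exy eq_sym yz.
by rewrite /wedge_pair /= setUC.
Qed.

Lemma adjpair_sum (f : {set {set T}} -> rat) :
  \sum_(P in adjpairs e V) f P = 2^-1 * \sum_(x in V) \sum_(y in V) \sum_(z in V)
    a x y * a x z * (y != z)%:R * f (wedge_pair ((x, y), z)).
Proof.
have -> : \sum_(x in V) \sum_(y in V) \sum_(z in V)
    a x y * a x z * (y != z)%:R * f (wedge_pair ((x, y), z)) =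
  \sum_(t in wedges) f (wedge_pair t).
  rewrite pair_big /= pair_big /= big_mkcond [RHS]big_mkcond /=.
  apply: eq_bigr => -[[x y] z] _ /=; rewrite inE /= /adj.
  case: (x \in V); case: (y \in V); case: (z \in V); case: (e x y); case: (e x z);
  by case: (y != z); rewrite /= ?mul1r ?mul0r ?mulr0.
rewrite (partition_big_imset wedge_pair) -adjpairsE mulr_sumr.
apply: eq_bigr => P; rewrite adjpairsE => /imsetP [[[x y] z] t ->].
rewrite (eq_bigr (fun _ => f (wedge_pair ((x, y), z)))); last by move=> t' /andP [_ /eqP ->].
by rewrite sumr_const wedge_fiber // -mulr_natr; field.
Qed.

Lemma eq_wedge_sum (F G : T -> T -> T -> rat) :
  (forall x y z, x \in V -> y \in V -> z \in V -> e x y -> e x z -> y != z ->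
     F x y z = G x y z) ->
  \sum_(x in V) \sum_(y in V) \sum_(z in V) a x y * a x z * (y != z)%:R * F x y z =
  \sum_(x in V) \sum_(y in V) \sum_(z in V) a x y * a x z * (y != z)%:R * G x y z.
Proof.
move=> FG; apply: eq_bigr => x xV; apply: eq_bigr => y yV; apply: eq_bigr => z zV.
rewrite /adj; case exy: (e x y); case exz: (e x z); case yz: (y != z); rewrite ?mulr0 ?mul0r //.
by rewrite FG.
Qed.

End Wedges.

Section Invariants.
Variables (T : finType) (e : rel T).
Hypothesis esym : symmetric e.
Hypothesis eirr : irreflexive e.
Local Notation a := (adj e).
Local Notation d V := (degR e V).
Variable V : {set T}.
Local Notation A := (degpair e V).
Local Notation T_ := (nbrsum e V).

Lemma edge_sum_degs (f : {set T} -> rat) (g : rat -> rat -> rat) :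
  (forall x y, x != y -> f [set x; y] = g (d V x) (d V y)) ->
  \sum_(E in edges e V) f E = 2^-1 * adjsum e V (fun x y => g (d V x) (d V y)).
Proof.
move=> fg; rewrite (edge_sum esym eirr); congr (_ * _); apply: eq_adjsum => // x y _ _ exy.
exact/fg/(edge_neq eirr).
Qed.

Lemma M2_degpair : M2 e V = 2^-1 * A 1 1.
Proof.
rewrite /M2 (@edge_sum_degs _ (fun s t => s ^+ 1 * t ^+ 1)) // => x y xy.
by rewrite prod_set2 // !expr1.
Qed.

Lemma M22_degpair : M22 e V = 2^-1 * A 2 2.
Proof.
rewrite /M22 (@edge_sum_degs _ (fun s t => s ^+ 2 * t ^+ 2)) // => x y xy.
by rewrite (@prod_set2 _ (fun z => d V z ^+ 2)).
Qed.

Lemma alpha_degpair l : alpha_l e V l = A l.+1 1.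
Proof.
rewrite /alpha_l (@edge_sum_degs _ (fun s t => s * t * (s ^+ l + t ^+ l))); last first.
  by move=> x y xy; rewrite prod_set2 // sum_set2.
have -> : adjsum e V (fun x y => d V x * d V y * (d V x ^+ l + d V y ^+ l)) =
          A l.+1 1 + A 1 l.+1.
  by rewrite -adjsumD; apply: eq_adjsum => x y _ _ _; rewrite !exprS; ring.
by rewrite (degpairC esym V 1); field.
Qed.

Lemma wedge_sum_mul x (g : T -> rat) :
  \sum_(y in V) \sum_(z in V) a x y * a x z * (y != z)%:R * (g y * g z) =
  (\sum_(y in V) a x y * g y) ^+ 2 - \sum_(y in V) a x y * g y ^+ 2.
Proof.
rewrite expr2 mulr_suml -sumrB; apply: eq_bigr => y yV.
rewrite mulr_sumr (bigD1 y yV) [X in _ = X - _](bigD1 y yV) /= eqxx /= mulr0 mul0r add0r.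
rewrite mulrACA adj_idem -expr2 addrAC subrr add0r.
by apply: eq_bigr => z /andP [_ zy]; rewrite eq_sym zy mulr1; ring.
Qed.

Lemma wedge_sum_add x (g : T -> rat) :
  \sum_(y in V) \sum_(z in V) a x y * a x z * (y != z)%:R * (g y + g z) =
  2 * (d V x - 1) * \sum_(y in V) a x y * g y.
Proof.
have half : \sum_(y in V) \sum_(z in V) a x y * a x z * (y != z)%:R * g y =
            (d V x - 1) * \sum_(y in V) a x y * g y.
  rewrite mulr_sumr; apply: eq_bigr => y yV.
  rewrite -mulr_suml (bigD1 y yV) /= eqxx mulr0 add0r.
  have -> : \sum_(z in V | z != y) a x y * a x z * (y != z)%:R = a x y * (d V x - a x y).
    rewrite degRE (bigD1 y yV) /= addrAC subrr add0r mulr_sumr.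
    by apply: eq_bigr => z /andP [_ zy]; rewrite eq_sym zy mulr1.
  by rewrite mulrBr adj_idem; ring.
have half' : \sum_(y in V) \sum_(z in V) a x y * a x z * (y != z)%:R * g z =
             (d V x - 1) * \sum_(y in V) a x y * g y.
  rewrite exchange_big -half; apply: eq_bigr => y _; apply: eq_bigr => z _.
  by rewrite eq_sym; ring.
rewrite (eq_bigr (fun y => \sum_(z in V) a x y * a x z * (y != z)%:R * g y
                         + \sum_(z in V) a x y * a x z * (y != z)%:R * g z)); last first.
  by move=> y _; rewrite -big_split; apply: eq_bigr => z _; rewrite mulrDr.
by rewrite big_split /= half half'; ring.
Qed.

Lemma nbr_sum_shift x (c : rat) : \sum_(y in V) a x y * (c + d V y) = c * d V x + T_ 1 x.
Proof.
rewrite degRE mulr_sumr /nbrsum -big_split /=; apply: eq_bigr => y _; ring.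
Qed.

Lemma nbr_sum_shift2 x (c : rat) :
  \sum_(y in V) a x y * (c + d V y) ^+ 2 = c ^+ 2 * d V x + 2 * c * T_ 1 x + T_ 2 x.
Proof.
rewrite degRE !mulr_sumr /nbrsum -!big_split /=; apply: eq_bigr => y _; ring.
Qed.

Lemma wedge_edeg x y z : e x y -> e x z -> y != z ->
  \prod_(E in wedge_pair ((x, y), z)) edeg e V E = (d V x - 2 + d V y) * (d V x - 2 + d V z).
Proof.
move=> exy exz yz; have [xy xz] := (edge_neq eirr exy, edge_neq eirr exz).
rewrite /wedge_pair /= (@prod_set2 _ (edeg e V)) ?set2_inj // /edeg !sum_set2 //; ring.
Qed.

(* EM_2 = 1/2 sum_x [(sum_{y~x} g y)^2 - sum_{y~x} (g y)^2] with g y = d(x) - 2 + d(y);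
   the bracket is a polynomial in d(x), T_1(x), T_2(x). *)
Lemma EM2_degpair : EM2 e V = 2^-1 * (A 3 0 - 5 * A 2 0 + 8 * A 1 0 - 4 * A 0 0
   + 2 * A 2 1 - 6 * A 1 1 + 4 * A 0 1 + Qsum e V - A 0 2).
Proof.
rewrite /EM2 (adjpair_sum esym eirr); congr (_ * _).
rewrite (eq_wedge_sum (G := fun x y z => (d V x - 2 + d V y) * (d V x - 2 + d V z)));
  last by move=> x y z _ _ _; exact: wedge_edeg.
rewrite (eq_bigr (fun x => 1 * d V x ^+ 4 + (-5) * d V x ^+ 3 + 8 * d V x ^+ 2 + (-4) * d V x
    + (2 * d V x ^+ 2 + (-6) * d V x + 4) * T_ 1 x + 1 * T_ 1 x ^+ 2 + (-1) * T_ 2 x)).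
  by rewrite sum_vertex_poly; ring.
by move=> x _; rewrite wedge_sum_mul nbr_sum_shift nbr_sum_shift2; ring.
Qed.

Lemma wedge_beta x y z : x \in V -> y \in V -> z \in V -> e x y -> e x z -> y != z ->
  (\sum_(w in \bigcap_(E in wedge_pair ((x, y), z)) E) d V w)
    * (\sum_(E in wedge_pair ((x, y), z)) edeg e V E)
  = d V x * ((d V x - 2 + d V y) + (d V x - 2 + d V z)).
Proof.
move=> xV yV zV exy exz yz; have [xy xz] := (edge_neq eirr exy, edge_neq eirr exz).
have t : ((x, y), z) \in wedges e V by rewrite inE /= xV yV zV exy exz.
rewrite (wedge_cap eirr t) big_set1 /wedge_pair /= (@sum_set2 _ (edeg e V)) ?set2_inj //.
by rewrite /edeg !sum_set2 //; ring.
Qed.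

(* beta = 1/2 sum_x d(x) * 2 (d(x) - 1) sum_{y~x} (d(x) - 2 + d(y)). *)
Lemma beta_degpair : betaidx e V = A 3 0 - 3 * A 2 0 + 2 * A 1 0 + A 2 1 - A 1 1.
Proof.
rewrite /betaidx (adjpair_sum esym eirr).
rewrite (eq_wedge_sum (G := fun x y z => d V x * ((d V x - 2 + d V y) + (d V x - 2 + d V z))));
  last exact: wedge_beta.
rewrite (eq_bigr (fun x => 2 * (1 * d V x ^+ 4 + (-3) * d V x ^+ 3 + 2 * d V x ^+ 2 + 0 * d V x
    + (1 * d V x ^+ 2 + (-1) * d V x + 0) * T_ 1 x + 0 * T_ 1 x ^+ 2 + 0 * T_ 2 x))).
  by rewrite -mulr_sumr sum_vertex_poly; field.
move=> x _; transitivity (d V x * \sum_(y in V) \sum_(z in V)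
    a x y * a x z * (y != z)%:R * ((d V x - 2 + d V y) + (d V x - 2 + d V z))).
  rewrite mulr_sumr; apply: eq_bigr => y _; rewrite mulr_sumr.
  by apply: eq_bigr => z _; ring.
by rewrite wedge_sum_add nbr_sum_shift; ring.
Qed.

End Invariants.

Section ShortCycles.
Variables (T : finType) (e : rel T).

Definition triangle_free := forall x u v, e u v -> e x u -> e x v -> False.

Definition square_free :=
  forall u v x y, e u v -> e u x -> e x y -> e y v -> x != v -> y != u -> False.

Hypothesis esym : symmetric e.
Hypothesis eirr : irreflexive e.
Hypothesis girth5 : girth_ge5 e.

Lemma girth5_triangle_free : triangle_free.
Proof.
move=> x u v euv exu exv; have := @girth5 [:: x; u; v] isT; rewrite /= !inE !negb_or.
have neq := edge_neq eirr.
by rewrite !neq // exu euv esym exv => /(_ isT isT).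
Qed.

Lemma girth5_square_free : square_free.
Proof.
move=> u v x y euv eux exy eyv xv yu; have := @girth5 [:: u; x; y; v] isT.
have neq := edge_neq eirr.
rewrite /= !inE !negb_or (neq _ _ eux) (neq _ _ euv) (neq _ _ exy) (neq _ _ eyv) xv eq_sym yu.
by rewrite eux exy eyv esym euv => /(_ isT isT).
Qed.

End ShortCycles.

Section Localisation.
Variables (T : finType) (e : rel T).
Hypothesis esym : symmetric e.
Hypothesis eirr : irreflexive e.
Hypothesis no_triangle : triangle_free e.
Hypothesis no_square : square_free e.
Local Notation a := (adj e).
Local Notation d V := (degR e V).
Variables (V : {set T}) (u v : T).
Hypotheses (uV : u \in V) (vV : v \in V) (euv : e u v).
Local Notation W := (V :\: [set u; v]).
Local Notation T_ := (nbrsum e V).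

Lemma uv_neq : u != v. Proof. exact: (edge_neq eirr euv). Qed.

(* Without triangles a vertex loses at most one neighbour when u, v are removed. *)
Lemma pow_loc k (t : rat) x :
  (t - a x u - a x v) ^+ k = t ^+ k + ((t - 1) ^+ k - t ^+ k) * (a x u + a x v).
Proof.
rewrite /adj; case xu: (e x u); case xv: (e x v) => /=; first by case: (no_triangle euv xu xv).
all: rewrite ?mulr1n ?mulr0n ?subr0; move: ((t - 1) ^+ k) (t ^+ k) => p q; ring.
Qed.

(* Degree power sums of G_uv: each neighbour of u or v has degree decreased by one. *)
Lemma M1pow_loc k : M1pow e W k = M1pow e V k
   + \sum_(x in V) a u x * ((d V x - 1) ^+ k - d V x ^+ k)
   + \sum_(x in V) a v x * ((d V x - 1) ^+ k - d V x ^+ k)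
   - (d V u - 1) ^+ k - (d V v - 1) ^+ k.
Proof.
rewrite /M1pow (eq_bigr (fun x => (d V x - a x u - a x v) ^+ k)); last first.
  by move=> x _; rewrite deg_setD2 // uv_neq.
rewrite sum_setD2 ?uv_neq // !(adjxx eirr) (adjC esym v u) (adj_edge euv) !subr0.
under eq_bigr do rewrite pow_loc.
rewrite big_split /=.
have -> : \sum_(x in V) ((d V x - 1) ^+ k - d V x ^+ k) * (a x u + a x v) =
  \sum_(x in V) a u x * ((d V x - 1) ^+ k - d V x ^+ k)
  + \sum_(x in V) a v x * ((d V x - 1) ^+ k - d V x ^+ k).
  by rewrite -big_split; apply: eq_bigr => x _; rewrite /= (adjC esym u x) (adjC esym v x); ring.
ring.
Qed.

Lemma nbr_sum_cubic w (c3 c2 c1 c0 : rat) :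
  \sum_(x in V) a w x * (c3 * d V x ^+ 3 + c2 * d V x ^+ 2 + c1 * d V x + c0) =
  c3 * T_ 3 w + c2 * T_ 2 w + c1 * T_ 1 w + c0 * d V w.
Proof.
rewrite /nbrsum degRE !mulr_sumr -!big_split /=; apply: eq_bigr => x _; ring.
Qed.

Lemma M1pow_loc_cubic k (c3 c2 c1 c0 : rat) :
  (forall t : rat, (t - 1) ^+ k - t ^+ k = c3 * t ^+ 3 + c2 * t ^+ 2 + c1 * t + c0) ->
  M1pow e W k = M1pow e V k
   + c3 * (T_ 3 u + T_ 3 v) + c2 * (T_ 2 u + T_ 2 v) + c1 * (T_ 1 u + T_ 1 v)
   + c0 * (d V u + d V v) - (d V u - 1) ^+ k - (d V v - 1) ^+ k.
Proof.
move=> diff.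
have sum_diff w : \sum_(x in V) a w x * ((d V x - 1) ^+ k - d V x ^+ k) =
                  c3 * T_ 3 w + c2 * T_ 2 w + c1 * T_ 1 w + c0 * d V w.
  by rewrite -nbr_sum_cubic; apply: eq_bigr => x _; rewrite diff.
rewrite M1pow_loc !sum_diff; ring.
Qed.

Lemma M1_loc : M1pow e W 2 = M1pow e V 2 - 2 * (T_ 1 u + T_ 1 v) + (d V u + d V v)
   - (d V u - 1) ^+ 2 - (d V v - 1) ^+ 2.
Proof. by rewrite (@M1pow_loc_cubic 2 0 0 (-2) 1) => [|t]; ring. Qed.

Lemma F_loc : M1pow e W 3 = M1pow e V 3 - 3 * (T_ 2 u + T_ 2 v) + 3 * (T_ 1 u + T_ 1 v)
   - (d V u + d V v) - (d V u - 1) ^+ 3 - (d V v - 1) ^+ 3.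
Proof. by rewrite (@M1pow_loc_cubic 3 0 (-3) 3 (-1)) => [|t]; ring. Qed.

Lemma M1pow4_loc : M1pow e W 4 = M1pow e V 4 - 4 * (T_ 3 u + T_ 3 v) + 6 * (T_ 2 u + T_ 2 v)
   - 4 * (T_ 1 u + T_ 1 v) + (d V u + d V v) - (d V u - 1) ^+ 4 - (d V v - 1) ^+ 4.
Proof. by rewrite (@M1pow_loc_cubic 4 (-4) 6 (-4) 1) => [|t]; ring. Qed.

(* Removing the edge uv destroys its d(u) + d(v) - 1 incident edges. *)
Lemma nedges_loc : (nedges e W)%:R = (nedges e V)%:R - d V u - d V v + 1 :> rat.
Proof.
rewrite !(nedges_degpair esym eirr) -!M1pow_degpair (@M1pow_loc_cubic 1 0 0 0 (-1)) => [|t].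
  by rewrite !expr1; field.
by rewrite !expr1; ring.
Qed.

Lemma adjsum_setD2 (G : T -> T -> rat) : adjsum e W G = adjsum e V G
  - \sum_(y in V) a u y * G u y - \sum_(y in V) a v y * G v y
  - \sum_(x in V) a x u * G x u - \sum_(x in V) a x v * G x v + G u v + G v u.
Proof.
rewrite /adjsum (eq_bigr (fun x => \sum_(y in V) a x y * G x y - a x u * G x u - a x v * G x v)).
  by rewrite sum_setD2 ?uv_neq // !sumrB !(adjxx eirr) (adjC esym v u) (adj_edge euv); ring.
by move=> x _; rewrite sum_setD2 ?uv_neq.
Qed.

(* lost x = 1 iff x is adjacent to u or to v: the degree that x loses in W. *)
Let lost (x : T) : rat := a x u + a x v.

(* No edge of W joins two vertices that lose degree: that would close a
   triangle or a 4-cycle through uv. *)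
Lemma lost_edge x y : x \in W -> y \in W -> e x y -> lost x * lost y = 0.
Proof.
rewrite !inE !negb_or => /andP [/andP [xu xv] _] /andP [/andP [yu yv] _] exy.
rewrite /lost /adj; case xu': (e x u); case xv': (e x v); case yu': (e y u); case yv': (e y v).
all: rewrite /= ?mulr1n ?mulr0n ?addr0 ?add0r ?mulr0 ?mul0r //; exfalso.
all: first [ exact: (no_triangle euv xu' xv') | exact: (no_triangle euv yu' yv')
  | by apply: (no_triangle exy (_ : e u x) (_ : e u y)); rewrite esym
  | by apply: (no_triangle exy (_ : e v x) (_ : e v y)); rewrite esym
  | by apply: (no_square euv (_ : e u x) exy (_ : e y v) xv yu); rewrite // esym
  | by apply: (no_square (_ : e v u) (_ : e v x) exy (_ : e y u) xu yv); rewrite // esym ].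
Qed.

Lemma sum_lost_nbr w c : w \in [set u; v] -> \sum_(x in V) a x w * (lost x * c) = c * d V w.
Proof.
move=> wuv; rewrite degRE mulr_sumr; apply: eq_bigr => x _; rewrite (adjC esym w x) /lost.
move: wuv; rewrite !inE /adj => /orP [] /eqP ->.
all: case xu: (e x u); case xv: (e x v) => /=; rewrite ?mulr1n ?mulr0n; try ring.
all: by case: (no_triangle euv xu xv).
Qed.

Lemma adjsum_lost : adjsum e V (fun x y => lost x * d V y) = nbr2sum e V u + nbr2sum e V v.
Proof.
rewrite /adjsum /nbr2sum -big_split; apply: eq_bigr => x _ /=.
rewrite (eq_bigr (fun y => lost x * (a x y * d V y ^+ 1))); last by move=> y _; rewrite expr1; ring.
by rewrite -mulr_sumr -/(T_ 1 x) /lost (adjC esym x u) (adjC esym x v); ring.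
Qed.

(* M_2(G_uv): the products d(x)d(y) over edges of G_uv, where at most one end
   of each edge lost degree. *)
Lemma M2_loc : M2 e W = 2^-1 * degpair e V 1 1
   - d V u * T_ 1 u - d V v * T_ 1 v + d V u * d V v - nbr2sum e V u - nbr2sum e V v
   + d V u ^+ 2 + d V v ^+ 2 + T_ 1 u + T_ 1 v - d V u - d V v.
Proof.
have lostC : adjsum e W (fun x y => d V x * lost y) = adjsum e W (fun x y => lost x * d V y).
  by rewrite (adjsum_sym esym); apply: eq_adjsum => x y _ _ _; rewrite mulrC.
have degW : adjsum e W (fun x y => d W x ^+ 1 * d W y ^+ 1) =
    adjsum e W (fun x y => d V x ^+ 1 * d V y ^+ 1)
    + (-1) * adjsum e W (fun x y => lost x * d V y) + (-1) * adjsum e W (fun x y => d V x * lost y).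
  rewrite -!adjsumZ -!adjsumD; apply: eq_adjsum => x y xW yW exy.
  rewrite !deg_setD2 ?uv_neq // -/(lost x) -/(lost y).
  have := lost_edge xW yW exy; rewrite /lost => lost0.
  by apply/eqP; rewrite -subr_eq0 -lost0; apply/eqP; ring.
have sum_nbrl w c : \sum_(y in V) a w y * (c * d V y) = c * T_ 1 w.
  by rewrite /nbrsum mulr_sumr; apply: eq_bigr => y _; rewrite expr1 mulrCA.
have sum_nbrr w c : \sum_(x in V) a x w * (d V x * c) = c * T_ 1 w.
  by rewrite /nbrsum mulr_sumr; apply: eq_bigr => y _; rewrite expr1 (adjC esym y w); ring.
have [lost_u lost_v] : lost u = 1 /\ lost v = 1.
  by rewrite /lost !(adjxx eirr) (adjC esym v u) (adj_edge euv) add0r addr0.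
rewrite (M2_degpair esym eirr) /degpair degW lostC !adjsum_setD2 adjsum_lost !expr1.
rewrite !sum_nbrl !sum_nbrr !sum_lost_nbr ?inE ?eqxx ?orbT // lost_u lost_v.
by field.
Qed.

End Localisation.

Section Levels.
Variables (T : finType) (e : rel T).
Hypothesis esym : symmetric e.
Hypothesis eirr : irreflexive e.
Hypothesis no_triangle : triangle_free e.
Hypothesis no_square : square_free e.
Local Notation m V := ((nedges e V)%:R : rat).

Lemma nmatch_step (V : {set T}) k (F : {set T} -> rat) s :
  (forall W, (nmatch e W k)%:R = F W) ->
  (forall u v, u \in V -> v \in V -> e u v ->
     2 * F (V :\: [set u; v]) = poly_eval e V s u v + poly_eval e V s v u) ->
  (nmatch e V k.+1)%:R = (k.+1)%:R^-1 * (2^-1 * \sum_(t <- s) t.1 * mono_atom e V t.2).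
Proof.
move=> hF hs; rewrite -(edge_sum_poly esym eirr (f := fun E => F (V :\: E))) //.
rewrite -(eq_bigr _ (fun E _ => hF (V :\: E))) -nmatch_rec.
by rewrite mulKf // pnatr_eq0.
Qed.

Ltac atomize V :=
  rewrite ?(nedges_degpair esym eirr) ?M1pow_degpair ?(M2_degpair esym eirr)
          ?(EM2_degpair esym eirr) ?(degpairC esym V 0 1) ?(degpairC esym V 0 2)
          ?(degpairC esym V 1 2) ?(degpairC esym V 1 3).

Ltac localize uV vV euv :=
  rewrite ?(nedges_loc esym eirr no_triangle uV vV euv)
          ?(M1_loc esym eirr no_triangle uV vV euv) ?(F_loc esym eirr no_triangle uV vV euv)
          ?(M1pow4_loc esym eirr no_triangle uV vV euv)
          ?(M2_loc esym eirr no_triangle no_square uV vV euv) ?(M2_degpair esym eirr).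

Ltac expand_cert := rewrite /poly_eval !big_cons !big_nil /=.

Definition p2 (V : {set T}) : rat := 2^-1 * (m V ^+ 2 + m V - M1pow e V 2).

Definition cert2 (V : {set T}) : seq (rat * monomial) :=
  [:: (1 + m V, Deg 0 0); (-2, Deg 1 0)].

Lemma nmatch2 (V : {set T}) : (nmatch e V 2)%:R = p2 V.
Proof.
rewrite (@nmatch_step V 1 (fun W => m W) (cert2 V)).
- by rewrite !big_cons big_nil /p2 /=; atomize V; field.
- exact: nmatch1.
by move=> u v uV vV euv; expand_cert; localize uV vV euv; ring.
Qed.

Definition p3 (V : {set T}) : rat := 6^-1 * m V ^+ 3 + 2^-1 * m V ^+ 2 + 2 / 3 * m V
  - 2^-1 * m V * M1pow e V 2 - M1pow e V 2 + M2 e V + 3^-1 * M1pow e V 3.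

Definition cert3 (V : {set T}) : seq (rat * monomial) :=
  [:: (2 + 3/2 * m V + 1/2 * m V ^+ 2 - 1/2 * M1pow e V 2, Deg 0 0);
      (-6 - 2 * m V, Deg 1 0); (2, Deg 2 0); (1, Deg 1 1); (2, Nbr 1)].

Lemma nmatch3 (V : {set T}) : (nmatch e V 3)%:R = p3 V.
Proof.
rewrite (@nmatch_step V 2 p2 (cert3 V)).
- by rewrite !big_cons big_nil /p3 /=; atomize V; field.
- exact: nmatch2.
by move=> u v uV vV euv; rewrite /p2; expand_cert; localize uV vV euv; field.
Qed.

(* p(G;4) = p4_local + p4_global: the first part is localized again at the
   next level, the second is kept as an edge sum in the final formula. *)
Definition p4_local (V : {set T}) : rat :=
  24^-1 * m V ^+ 4 + 4^-1 * m V ^+ 3 + 19 / 24 * m V ^+ 2 - 11 / 4 * m V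
  - 5 / 4 * m V * M1pow e V 2 + 7 / 2 * M1pow e V 2 - 2 * M2 e V
  - 3 / 2 * M1pow e V 3 + 4^-1 * M1pow e V 4.

Definition p4_global (V : {set T}) : rat :=
  - EM2 e V + 8^-1 * M1pow e V 2 ^+ 2 + 3^-1 * m V * M1pow e V 3
  - 4^-1 * m V ^+ 2 * M1pow e V 2 + m V * M2 e V.

Definition cert4 (V : {set T}) : seq (rat * monomial) :=
  [:: (5 + 19/6 * m V + m V ^+ 2 + 1/6 * m V ^+ 3 - 3/2 * M1pow e V 2
         - 1/2 * m V * M1pow e V 2 + 1/3 * M1pow e V 3 + M2 e V, Deg 0 0);
      (-20 - 7 * m V - m V ^+ 2 + M1pow e V 2, Deg 1 0);
      (12 + 2 * m V, Deg 2 0); (6 + m V, Deg 1 1); (-2, Deg 3 0); (-2, Deg 2 1);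
      (10 + 2 * m V, Nbr 1); (-4, DegNbr); (-2, NbrDeg); (-2, Nbr2); (-2, Nbr 2)].

Lemma nmatch4 (V : {set T}) : (nmatch e V 4)%:R = p4_local V + p4_global V.
Proof.
rewrite (@nmatch_step V 3 p3 (cert4 V)).
- by rewrite !big_cons big_nil /p4_local /p4_global /=; atomize V; field.
- exact: nmatch3.
by move=> u v uV vV euv; rewrite /p3; expand_cert; localize uV vV euv; field.
Qed.

Definition cert5 (V : {set T}) : seq (rat * monomial) :=
  [:: (-29/3 + 9/4 * m V + 43/24 * m V ^+ 2 + 5/12 * m V ^+ 3 + 1/24 * m V ^+ 4
         + 9/4 * M1pow e V 2 - 5/4 * m V * M1pow e V 2 - 3/2 * M1pow e V 3
         + 1/4 * M1pow e V 4 - 2 * M2 e V, Deg 0 0);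
      (55/2 - 44/3 * m V - 5/2 * m V ^+ 2 - 1/3 * m V ^+ 3 + 5/2 * M1pow e V 2, Deg 1 0);
      (-113/12 + 5 * m V + 1/2 * m V ^+ 2, Deg 2 0);
      (109/12 + 5/2 * m V + 1/2 * m V ^+ 2, Deg 1 1);
      (5/3 - 1/3 * m V, Deg 3 0); (-5 - m V, Deg 2 1); (-5/12, Deg 4 0);
      (1/3, Deg 3 1); (1/4, Deg 2 2); (-24 + 5 * m V, Nbr 1); (-1, DegNbr);
      (-5, NbrDeg); (4, Nbr2); (12, Nbr 2); (-2, Nbr 3)].

Lemma nmatch5 (V : {set T}) : (nmatch e V 5)%:R =
  5^-1 * (2^-1 * \sum_(t <- cert5 V) t.1 * mono_atom e V t.2
          + \sum_(E in edges e V) p4_global (V :\: E)).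
Proof.
have := nmatch_rec e V 4; rewrite (eq_bigr _ (fun E _ => nmatch4 (V :\: E))) big_split /=.
rewrite (edge_sum_poly esym eirr (s := cert5 V)) => [<-|u v uV vV euv].
  by rewrite mulKf // pnatr_eq0.
by rewrite /p4_local; expand_cert; localize uV vV euv; field.
Qed.

End Levels.

Theorem theorem2p10 (T : finType) (e : rel T) :
  simple_graph e -> girth_ge5 e ->
  let G := [set: T] in
  let m : rat := (nedges e G)%:R in
  let Guv (E : {set T}) := ~: E in
  let mG (E : {set T}) : rat := (nedges e (Guv E))%:R in
  (nmatch e G 5)%:R = 5^-1 * (
      24^-1 * m * (m ^+ 4 + 10 * m ^+ 3 + 43 * m ^+ 2 + 54 * m - 328)
    + 5 / 4 * (M1 e G) ^+ 2
    - 2^-1 * alpha_l e G 1 * (m - 7)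
    - 5 / 6 * alpha_l e G 2
    - 12^-1 * M1 e G * (2 * m ^+ 3 + 30 * m ^+ 2 + 61 * m - 225)
    + 2^-1 * betaidx e G
    + 12^-1 * M2 e G * (6 * m ^+ 2 + 66 * m - 239)
    + 24^-1 * Fidx e G * (6 * m ^+ 2 + 24 * m - 149)
    + 12^-1 * M1pow e G 4 * (m + 10)
    + 4^-1 * M22 e G
    - EM2 e G
    - 5 / 24 * M1pow e G 5
    + 8^-1 * (\sum_(E in edges e G) (M1 e (Guv E)) ^+ 2)
    + 3^-1 * (\sum_(E in edges e G) mG E * Fidx e (Guv E))
    - 4^-1 * (\sum_(E in edges e G) mG E ^+ 2 * M1 e (Guv E))
    - (\sum_(E in edges e G) EM2 e (Guv E))
    + (\sum_(E in edges e G) mG E * M2 e (Guv E))).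
Proof.
case=> esym eirr girth5 G m Guv mG; rewrite /mG /Guv /m /M1 /Fidx.
have no_triangle := girth5_triangle_free esym eirr girth5.
have no_square := girth5_square_free esym eirr girth5.
(* p(G;5) from the recursion; its non-local part is already a sum over edges. *)
rewrite (nmatch5 esym eirr no_triangle no_square) !big_cons big_nil /=.
have -> : \sum_(E in edges e G) p4_global e (G :\: E) =
    - (\sum_(E in edges e G) EM2 e (~: E))
    + 8^-1 * (\sum_(E in edges e G) M1pow e (~: E) 2 ^+ 2)
    + 3^-1 * (\sum_(E in edges e G) (nedges e (~: E))%:R * M1pow e (~: E) 3)
    - 4^-1 * (\sum_(E in edges e G) (nedges e (~: E))%:R ^+ 2 * M1pow e (~: E) 2)
    + (\sum_(E in edges e G) (nedges e (~: E))%:R * M2 e (~: E)).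
  rewrite !mulr_sumr -!sumrN -!big_split /=; apply: eq_bigr => E _.
  by rewrite /p4_global /G setTD; ring.
(* Everything else is a combination of arc atoms of G. *)
rewrite !(alpha_degpair esym eirr) (beta_degpair esym eirr) (M22_degpair esym eirr).
rewrite (EM2_degpair esym eirr) (M2_degpair esym eirr) (nedges_degpair esym eirr) !M1pow_degpair.
rewrite (degpairC esym G 0 1) (degpairC esym G 0 2) (degpairC esym G 1 2) (degpairC esym G 1 3).
by field.
Qed.
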